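(* Let $G_1,G_2,\ldots,G_k$ be a finite sequence of pairwise disjoint connected graphs and let $x_i\in V(G_i)$. Let $G$ be the circuit of graphs $\{G_i\}_{i=1}^k$ with respect to the vertices $\{x_i\}_{i=1}^k$, i.e. the graph obtained by identifying the vertex $x_i$ of the graph $G_i$ with the $i$-th vertex of the cycle graph $C_k$. Then $$SO(G)\geq 2k\sqrt{2}+\sum_{i=1}^{k}SO(G_i).$$ The equality holds if and only if for every $1\leq i\leq k$, $G_i=K_1$.
   Context: For a finite simple graph $H$, the Sombor index is $SO(H)=\sum_{uv\in E(H)}\sqrt{d_u^2+d_v^2}$, where $d_u$ is the degree of vertex $u$ in $H$. *)

From HB Require Import structures.
From mathcomp Require Import all_boot all_order all_algebra.
Set Implicit Arguments. Unset Strict Implicit. Unset Printing Implicit Defensive.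
Import Order.TTheory GRing.Theory Num.Theory.
Local Open Scope ring_scope.

(* A finite simple graph is a symmetric irreflexive relation e on a finType. *)

Definition deg (T : finType) (e : rel T) (u : T) : nat := #|[set v | e u v]|.

(* Sombor index: sum over (unordered) edges uv of sqrt(d_u^2 + d_v^2);
   each edge is counted twice in the sum over ordered adjacent pairs, hence / 2. *)
Definition sombor (R : rcfType) (T : finType) (e : rel T) : R :=
  (\sum_(u : T) \sum_(v : T | e u v)
      Num.sqrt (((deg e u)%:R : R) ^+ 2 + ((deg e v)%:R : R) ^+ 2)) / 2.

Definition cycle_adj (k : nat) (i j : 'I_k) : bool :=
  (val j == (val i).+1 %% k)%N || (val i == (val j).+1 %% k)%N.

(* The circuit of graphs (T i, e i) w.r.t. the vertices x i: vertex set is the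
   disjoint union {i : 'I_k & T i}; edges are the edges of each G_i, plus the
   cycle edges x_i x_j for i ~ j in C_k (x_i identified with vertex i of C_k). *)
Definition circuit_rel (k : nat) (T : 'I_k -> finType) (e : forall i, rel (T i))
    (x : forall i, T i) : rel {i : 'I_k & T i} :=
  fun u v =>
    if tag u == tag v then e (tag u) (tagged u) (tagged_as u v)
    else [&& cycle_adj (tag u) (tag v), tagged u == x (tag u)
           & tagged v == x (tag v)].

(* Every vertex of G_i keeps its degree in G except x_i, whose degree grows by 2,
   so each edge term sqrt (d_u^2 + d_v^2) of G_i can only grow, strictly at the
   edges through x_i, while the k cycle edges join vertices of degree at least 2
   and contribute at least 2 sqrt 2 each.  Equality thus forces every x_i to be
   isolated in G_i, which for a connected G_i means G_i = K_1. *)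

From mathcomp Require Import all_boot all_order all_algebra.
From mathcomp Require Import zify ring.
Import Order.TTheory GRing.Theory Num.Theory.
Local Open Scope ring_scope.

Lemma val_ordS k (i : 'I_k) : val (ordS i) = if i.+1 == k then 0%N else i.+1.
Proof.
case: eqP => [/= ->|Si_neq_k]; first exact: modnn.
by apply: modn_small; have := ltn_ord i; lia.
Qed.

Lemma ordS_neq k (i : 'I_k) : (1 < k)%N -> ordS i != i.
Proof. by rewrite -(inj_eq val_inj) val_ordS /=; case: ifP => /eqP; lia. Qed.

Lemma ordS2_neq k (i : 'I_k) : (2 < k)%N -> ordS (ordS i) != i.
Proof.
have := ltn_ord i; rewrite -(inj_eq val_inj) !val_ordS /=.
by case: ifP => /eqP; case: ifP => /eqP; lia.
Qed.

Lemma cycle_adjE k (i j : 'I_k) : cycle_adj i j = (j == ordS i) || (j == ord_pred i).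
Proof. by congr orb; rewrite eq_sym -[in RHS](can_eq (@ordSK k)) ord_predK. Qed.

Lemma cycle_adj_irr k : (1 < k)%N -> irreflexive (@cycle_adj k).
Proof.
move=> k_gt1 i; rewrite cycle_adjE -[X in _ || X](inj_eq (@ordS_inj k)) ord_predK.
by rewrite eq_sym orbb; apply/negbTE/ordS_neq.
Qed.

Lemma card_cycle_adj k (i : 'I_k) : (2 < k)%N -> #|cycle_adj i| = 2%N.
Proof.
move=> k_gt2; rewrite (@eq_card _ _ (pred2 (ordS i) (ord_pred i))); last first.
  by move=> j; rewrite inE; exact: cycle_adjE.
by rewrite card2 -(inj_eq (@ordS_inj k)) ord_predK ordS2_neq.
Qed.

Definition sombor_weight (R : rcfType) (m n : nat) : R :=
  Num.sqrt (m%:R ^+ 2 + n%:R ^+ 2).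

Lemma sombor_weight_addn_leif (R : rcfType) (m1 m2 p1 p2 : nat) :
  sombor_weight R m1 m2 <= sombor_weight R (m1 + p1) (m2 + p2)
    ?= iff (p1 == 0%N) && (p2 == 0%N).
Proof.
rewrite /sombor_weight -!natrX -!natrD; split.
  by rewrite ler_wsqrtr // ler_nat leq_add // leq_sqr leq_addr.
rewrite eqr_sqrt ?ler0n // eqr_nat.
apply/eqP/andP => [|[/eqP-> /eqP->]]; last by rewrite !addn0.
nia.
Qed.

Lemma sombor_weight22 (R : rcfType) : sombor_weight R 2 2 = 2 * Num.sqrt 2.
Proof.
rewrite /sombor_weight (_ : 2%:R ^+ 2 + 2%:R ^+ 2 = 2 ^+ 2 * 2 :> R); last by ring.
by rewrite sqrtrM ?sqrtr_sqr ?ger0_norm // exprn_ge0.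
Qed.

Lemma sombor_mul2 (R : rcfType) (T : finType) (e : rel T) :
  sombor R e * 2 = \sum_u \sum_(v | e u v) sombor_weight R (deg e u) (deg e v).
Proof. by rewrite divfK ?pnatr_eq0. Qed.

Lemma deg_eq0 (T : finType) (r : rel T) (a : T) : (deg r a == 0%N) = [forall b, ~~ r a b].
Proof.
rewrite /deg cards_eq0; apply/eqP/forallP => [/setP r_a b | r_a].
  by have := r_a b; rewrite !inE => ->.
by apply/setP => b; rewrite !inE (negbTE (r_a b)).
Qed.

Lemma deg_eq0_connected (T : finType) (r : rel T) (a : T) :
  irreflexive r -> (forall b c, connect r b c) -> (deg r a == 0%N) = (#|T| == 1%N).
Proof.
move=> r_irr r_conn; rewrite deg_eq0; apply/forallP/eqP => [a_iso | /fintype1 [c Tc] b].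
  rewrite -(card1 a); apply: eq_card => b; rewrite !inE.
  have /connectP [[|c p] /= r_p ->] := r_conn a b; first by rewrite eqxx.
  by move: r_p; rewrite (negbTE (a_iso c)).
by rewrite (Tc a) (Tc b) r_irr.
Qed.

Section Circuit.
Variables (k : nat) (T : 'I_k -> finType) (e : forall i, rel (T i)) (x : forall i, T i).
Hypothesis k_gt2 : (2 < k)%N.
Local Notation V := {i : 'I_k & T i}.
Local Notation E := (circuit_rel e x).
Local Notation x_isolated i := (deg (e i) (x i) == 0%N).

Lemma big_tagged (W : Type) (idx : W) (op : Monoid.com_law idx)
    (P : pred V) (F : V -> W) :
  \big[op/idx]_(v | P v) F v =
  \big[op/idx]_(i : 'I_k) \big[op/idx]_(b : T i | P (Tagged T b)) F (Tagged T b).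
Proof.
rewrite (@sig_big_dep _ _ op _ _ xpredT (fun i b => P (Tagged T b))
                                     (fun i b => F (Tagged T b))).
by apply: eq_big => -[i b].
Qed.

Lemma big_circuit_nbr (W : Type) (idx : W) (op : Monoid.com_law idx)
    i (a : T i) (F : V -> W) :
  \big[op/idx]_(v | E (Tagged T a) v) F v =
  op (\big[op/idx]_(b | e i a b) F (Tagged T b))
     (if a == x i then \big[op/idx]_(j | cycle_adj i j) F (Tagged T (x j)) else idx).
Proof.
rewrite big_tagged (bigD1 i) //=; congr (op _ _).
  by apply: eq_bigl => b; rewrite /circuit_rel /= eqxx tagged_asE.
rewrite (eq_bigr (fun j =>
  if cycle_adj i j && (a == x i) then F (Tagged T (x j)) else idx)).
  case: (a == x i); last by rewrite big1 // => j _; rewrite andbF.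
  rewrite -big_mkcondr; apply: eq_bigl => j /=; rewrite andbT.
  by case: eqP => [->|_]; rewrite ?cycle_adj_irr ?(ltnW k_gt2).
move=> j ji; rewrite /circuit_rel /= eq_sym (negbTE ji).
case: (cycle_adj i j); case: (a == x i); rewrite ?big_pred0_eq //.
exact: big_pred1_eq.
Qed.

Lemma deg_circuit i (a : T i) :
  deg E (Tagged T a) = (deg (e i) a + 2 * (a == x i))%N.
Proof.
rewrite /deg -!sum1_card (eq_bigl (E (Tagged T a))) => [|v]; last by rewrite inE.
rewrite big_circuit_nbr; congr addn; first by apply: eq_bigl => b; rewrite inE.
by case: (a == x i); rewrite ?muln0 // sum1_card card_cycle_adj.
Qed.

Lemma big_circuit_edges (W : Type) (idx : W) (op : Monoid.com_law idx)
    (F : V -> V -> W) :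
  \big[op/idx]_u \big[op/idx]_(v | E u v) F u v =
  op (\big[op/idx]_i \big[op/idx]_(a : T i) \big[op/idx]_(b | e i a b)
        F (Tagged T a) (Tagged T b))
     (\big[op/idx]_i \big[op/idx]_(j | cycle_adj i j)
        F (Tagged T (x i)) (Tagged T (x j))).
Proof.
rewrite big_tagged -big_split; apply: eq_bigr => i _.
under eq_bigr do rewrite big_circuit_nbr.
by rewrite big_split /= -big_mkcond big_pred1_eq.
Qed.

Hypothesis e_sym : forall i, symmetric (e i).
Variable R : rcfType.

Lemma sombor_circuit_internal_leif i :
  sombor R (e i) * 2
    <= \sum_(a : T i) \sum_(b | e i a b)
         sombor_weight R (deg E (Tagged T a)) (deg E (Tagged T b))
    ?= iff x_isolated i.
Proof.
rewrite sombor_mul2.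
under [X in _ <= X ?= iff _]eq_bigr do under eq_bigr do rewrite !deg_circuit.
rewrite (_ : x_isolated i = [forall a, [forall (b | e i a b),
           (2 * (a == x i) == 0)%N && (2 * (b == x i) == 0)%N]]).
  by apply: leif_sum => a _; apply: leif_sum => b _; apply: sombor_weight_addn_leif.
rewrite deg_eq0; apply/forallP/forallP => [x_iso a | avoid_x b].
  apply/forallP => b; apply/implyP => e_ab.
  have [a_x|_] := eqVneq a (x i); first by rewrite a_x (negbTE (x_iso b)) in e_ab.
  have [b_x|_] //= := eqVneq b (x i).
  by rewrite b_x e_sym (negbTE (x_iso a)) in e_ab.
by apply/negP => e_xb; have /forallP/(_ b) := avoid_x (x i); rewrite e_xb eqxx.
Qed.

Lemma sombor_circuit_cycle_leif :
  2 * k%:R * Num.sqrt 2 * 2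
    <= \sum_i \sum_(j | cycle_adj i j)
         sombor_weight R (deg E (Tagged T (x i))) (deg E (Tagged T (x j)))
    ?= iff [forall i, [forall (j | cycle_adj i j), x_isolated i && x_isolated j]].
Proof.
have -> : 2 * k%:R * Num.sqrt 2 * 2
          = \sum_(i < k) \sum_(j | cycle_adj i j) sombor_weight R 2 2.
  transitivity (\sum_(i < k) sombor_weight R 2 2 *+ 2).
    by rewrite sumr_const card_ord sombor_weight22; ring.
  by apply: eq_bigr => i _; rewrite (sumr_const (cycle_adj i)) card_cycle_adj.
apply: leif_sum => i _; apply: leif_sum => j _.
by rewrite !deg_circuit !eqxx !muln1 ![(_ + 2)%N]addnC; apply: sombor_weight_addn_leif.
Qed.

Lemma sombor_circuit_leif :
  2 * k%:R * Num.sqrt 2 + \sum_i sombor R (e i) <= sombor R E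
    ?= iff [forall i, x_isolated i].
Proof.
rewrite -(mono_leif (ler_pM2r (ltr0n R 2))) sombor_mul2 big_circuit_edges.
rewrite mulrDl mulr_suml addrC.
(* The equality condition of the cycle part follows from the internal ones. *)
rewrite (_ : [forall i, _] = [forall i, x_isolated i] && [forall i,
   [forall (j | cycle_adj i j), x_isolated i && x_isolated j]]).
  exact: leifD (leif_sum (fun i _ => sombor_circuit_internal_leif i))
               sombor_circuit_cycle_leif.
apply/idP/andP => [x_iso|[] //]; split => //.
apply/forallP => i; apply/forallP => j; apply/implyP => _.
by rewrite (forallP x_iso i) (forallP x_iso j).
Qed.

End Circuit.

Theorem mainTheorem6 (R : rcfType) (k : nat) (T : 'I_k -> finType)
    (e : forall i, rel (T i)) (x : forall i, T i) :
  (3 <= k)%N ->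
  (forall i, symmetric (e i)) ->
  (forall i, irreflexive (e i)) ->
  (forall i (a b : T i), connect (e i) a b) ->
  (2 * k%:R * Num.sqrt 2 + \sum_(i < k) sombor R (e i)
     <= sombor R (circuit_rel e x))
  /\ (sombor R (circuit_rel e x)
        = 2 * k%:R * Num.sqrt 2 + \sum_(i < k) sombor R (e i)
      <-> (forall i, #|T i| = 1%N)).
Proof.
move=> k_gt2 e_sym e_irr e_conn.
have [le_SO eq_SO] := @sombor_circuit_leif k T e x k_gt2 e_sym R.
have isolated_trivial i : (deg (e i) (x i) == 0%N) = (#|T i| == 1%N).
  exact: deg_eq0_connected.
split => //; split => [/esym/eqP | T_trivial].
  by rewrite eq_SO => /forallP x_iso i; apply/eqP; rewrite -isolated_trivial.
by apply/esym/eqP; rewrite eq_SO; apply/forallP => i; rewrite isolated_trivial T_trivial.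
Qed.
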